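(* Let $(\alpha,\beta)\in Q$, let $x^*=\lim_kx_k$ for the GAFS sequence, and let $N=\{i: x^*_i=0\}$, $B=\{i: x^*_i>0\}$. There exist $\delta>0$ and $R>0$ such that for each $k\ge0$ $$\frac{c^Tx_k-c^Tx^*}{\|x_k-x^*\|}\ge\frac1R,\qquad \frac{c^Tx_k-c^Tx^*}{\sum_{i\in N}(x_k)_i}\ge\delta,\qquad \frac{c^Tx_k-c^Tx^*}{\sum_{i\in B}|(x_k)_i-x^*_i|}\ge\delta.$$
   Context: Let $A\in\mathbb{R}^{m\times n}$ have rank $m$, $b\in\mathbb{R}^m$, $c\in\mathbb{R}^n$. Primal LP: $\min c^Tx$ s.t. $Ax=b$, $x\ge 0$. Standing assumptions: the primal has a strictly positive feasible point; $c^Tx$ is not constant on the primal feasible region; the LP has an optimal solution. For $u\in\mathbb{R}^n$, $\gamma(u)=\max\{u_i: u_i>0\}$; $\|\cdot\|$ Euclidean norm. For $x>0$, $X=\mathrm{diag}(x)$. GAFS sequence: fix $\alpha\in(0,1)$, $\beta\in[0,1)$, and $x_0>0$ with $Ax_0=b$. For $k\ge0$ let $X_k=\mathrm{diag}(x_k)$, $y_k=(AX_k^2A^T)^{-1}AX_k^2c$, $s_k=c-A^Ty_k$. Set $x_1=x_0-\alpha\frac{X_0^2s_0}{\gamma(X_0s_0)}$ and, for $k\ge1$, $x_{k+1}=x_k-\alpha\frac{X_k^2s_k}{\gamma(X_ks_k)}+\beta\frac{x_k-x_{k-1}}{\|X_k^{-1}(x_k-x_{k-1})\|_\infty}$ (all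 quantities assumed well defined). $Q=\{(\alpha,\beta): 0<\alpha<1,\ 0\le\beta<1/\phi,\ \alpha+\beta\le 2/3\}$ with $\phi=(1+\sqrt5)/2$. *)

(* The real numbers are modelled by an arbitrary
   Archimedean real closed field R. *)
From HB Require Import structures.
From mathcomp Require Import all_boot all_order all_algebra.
Set Implicit Arguments. Unset Strict Implicit. Unset Printing Implicit Defensive.
Import Order.TTheory GRing.Theory Num.Theory.
Local Open Scope ring_scope.

Section GAFS.
Variables (R : archiRcfType) (m n : nat).
Implicit Types (x u d c : 'cV[R]_n) (A : 'M[R]_(m, n)).

Definition Xsq x : 'M[R]_n := diag_mx (\row_i (x i 0 ^+ 2)).

Definition dual_y A c x : 'cV[R]_m :=
  invmx (A *m Xsq x *m A^T) *m (A *m Xsq x *m c).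

Definition slack A c x : 'cV[R]_n := c - A^T *m dual_y A c x.

Definition Xmul x u : 'cV[R]_n := \col_i (x i 0 * u i 0).

(* gamma(u) = max { u_i : u_i > 0 } (equal to the max of the u_i and 0;
   it is the paper's gamma whenever some u_i > 0) *)
Definition gam u : R := \big[Num.max/0]_(i < n) u i 0.

Definition ninf_scaled x d : R := \big[Num.max/0]_(i < n) `| d i 0 / x i 0 |.

Definition enorm u : R := Num.sqrt (\sum_(i < n) u i 0 ^+ 2).

Definition afs_step A c (alpha : R) x : 'cV[R]_n :=
  - ((alpha / gam (Xmul x (slack A c x))) *: (Xsq x *m slack A c x)).

(* pairs (x_k, x_{k+1}) *)
Fixpoint gafs_pair A c (alpha beta : R) x0 (k : nat) : 'cV[R]_n * 'cV[R]_n :=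
  match k with
  | 0 => (x0, x0 + afs_step A c alpha x0)
  | k'.+1 =>
      let p := gafs_pair A c alpha beta x0 k' in
      let xp := p.1 in let xk := p.2 in
      (xk, xk + afs_step A c alpha xk
              + (beta / ninf_scaled xk (xk - xp)) *: (xk - xp))
  end.

Definition gafs A c alpha beta x0 (k : nat) : 'cV[R]_n :=
  (gafs_pair A c alpha beta x0 k).1.

Definition feasible A (b : 'cV[R]_m) x : Prop :=
  A *m x = b /\ forall i, 0 <= x i 0.

Definition cost c x : R := (c^T *m x) 0 0.

End GAFS.

Definition phi (R : rcfType) : R := (1 + Num.sqrt 5) / 2.

Definition inQ (R : rcfType) (alpha beta : R) : Prop :=
  0 < alpha < 1 /\ 0 <= beta /\ beta < 1 / phi R /\ alpha + beta <= 2 / 3.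

From HB Require Import structures.
From mathcomp Require Import all_boot all_order all_algebra.
From mathcomp Require Import ring lra.
From Stdlib Require Import Classical.
Set Implicit Arguments. Unset Strict Implicit. Unset Printing Implicit Defensive.
Import Order.TTheory GRing.Theory Num.Theory.
Local Open Scope ring_scope.

(* A Hoffman-type constant for ker A drives the argument.  Call u in ker A a
   descent direction if c^T v > 0 for every nonzero kernel vector v conformal
   to u (sign-compatible, with support inside that of u).  Splitting u into
   kernel vectors of smaller support reduces to elementary vectors (minimal
   supports, one line per support), of which there are finitely many up to
   scaling; this gives mu > 0 with mu |u|_1 <= c^T u for every descent
   direction u.  The affine-scaling direction X^2 s is one, since c^T v = s^T v
   on ker A, and the momentum term is a nonnegative multiple of the previous
   step, so every step d_k satisfies mu |d_k|_1 <= - c^T d_k.  Telescoping and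
   passing to the limit give mu |x_k - x*|_1 <= c^T x_k - c^T x*, which bounds
   all three ratios.  Once convergence is assumed, membership in Q is only
   used through alpha >= 0 and beta >= 0. *)

Section L1Geometry.
Variables (R : realFieldType) (n : nat).
Implicit Types (u v w c : 'cV[R]_n) (mu : R).

Definition l1norm v := \sum_i `|v i 0|.
Definition vdot c v := \sum_i c i 0 * v i 0.
Definition supp v := [set i | v i 0 != 0].

Lemma l1norm_ge0 v : 0 <= l1norm v.
Proof. exact: sumr_ge0. Qed.

Lemma col_neq0 v : v != 0 -> exists i, v i 0 != 0.
Proof.
move=> nz; case: (pickP (fun i => v i 0 != 0)) => [i vi | v0]; first by exists i.
case/eqP: nz; apply/matrixP => i j; rewrite ord1 mxE; exact/eqP/negbFE/v0.
Qed.

Lemma l1norm_gt0 v : v != 0 -> 0 < l1norm v.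
Proof.
move=> /col_neq0 [i vi]; rewrite /l1norm (bigD1 i) //= ltr_pwDl ?normr_gt0 //.
exact: sumr_ge0.
Qed.

Lemma norm_le_l1norm v i : `|v i 0| <= l1norm v.
Proof. by rewrite /l1norm (bigD1 i) //= lerDl sumr_ge0. Qed.

Lemma sum_norm_le_l1norm (P : pred 'I_n) v : \sum_(i | P i) `|v i 0| <= l1norm v.
Proof. by rewrite /l1norm [leRHS](bigID P) /= lerDl sumr_ge0. Qed.

Lemma l1normD v w : l1norm (v + w) <= l1norm v + l1norm w.
Proof. rewrite -big_split; apply: ler_sum => i _; rewrite mxE; exact: ler_normD. Qed.

Lemma l1normZ a v : l1norm (a *: v) = `|a| * l1norm v.
Proof. rewrite /l1norm mulr_sumr; apply: eq_bigr => i _; by rewrite mxE normrM. Qed.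

Lemma l1normN v : l1norm (- v) = l1norm v.
Proof. by rewrite -scaleN1r l1normZ normrN1 mul1r. Qed.

Lemma l1norm0 : l1norm 0 = 0.
Proof. by rewrite -(scale0r 0) l1normZ normr0 mul0r. Qed.

Lemma l1normB v w : l1norm (v - w) = l1norm (w - v).
Proof. by rewrite -l1normN opprB. Qed.

Lemma vdotE c v : vdot c v = (c^T *m v) 0 0.
Proof. by rewrite mxE; apply: eq_bigr => i _; rewrite mxE. Qed.

Lemma vdotD c v w : vdot c (v + w) = vdot c v + vdot c w.
Proof. rewrite -big_split; apply: eq_bigr => i _; by rewrite mxE mulrDr. Qed.

Lemma vdotZ c a v : vdot c (a *: v) = a * vdot c v.
Proof. rewrite /vdot mulr_sumr; apply: eq_bigr => i _; rewrite mxE; ring. Qed.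

Lemma vdotN c v : vdot c (- v) = - vdot c v.
Proof. by rewrite -scaleN1r vdotZ mulN1r. Qed.

Lemma vdotB c v w : vdot c (v - w) = vdot c v - vdot c w.
Proof. by rewrite vdotD vdotN. Qed.

Lemma vdot0 c : vdot c 0 = 0.
Proof. by rewrite -(scale0r 0) vdotZ mul0r. Qed.

Lemma norm_vdot_le c v : `|vdot c v| <= l1norm c * l1norm v.
Proof.
rewrite /vdot /l1norm mulr_sumr; apply: le_trans (ler_norm_sum _ _ _) _.
by apply: ler_sum => i _; rewrite normrM ler_wpM2r // norm_le_l1norm.
Qed.

Definition conformal w u := forall i, 0 <= w i 0 * u i 0 /\ (u i 0 = 0 -> w i 0 = 0).

Lemma conformal_refl u : conformal u u.
Proof. by move=> i; rewrite -expr2 sqr_ge0. Qed.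

Lemma conformal_trans u v w : conformal v w -> conformal w u -> conformal v u.
Proof.
move=> vw wu i; have [vw1 vw2] := vw i; have [wu1 wu2] := wu i.
split=> [|/wu2/vw2 //].
have [w0 | wn0] := eqVneq (w i 0) 0; first by rewrite (vw2 w0) mul0r.
have : 0 <= (v i 0 * w i 0) * (w i 0 * u i 0) by exact: mulr_ge0.
have -> : (v i 0 * w i 0) * (w i 0 * u i 0) = (v i 0 * u i 0) * w i 0 ^+ 2 by ring.
by rewrite pmulr_lge0 // exprn_even_gt0 //= wn0.
Qed.

Lemma conformal_supp w u : conformal w u -> supp w \subset supp u.
Proof. by move=> wu; apply/subsetP => i; rewrite !inE; apply: contra => /eqP /(wu i).2 ->. Qed.

Lemma conformal_scale_proper u w (k : 'I_n -> R) j :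
  (forall i, w i 0 = k i * u i 0) -> (forall i, i \in supp u -> 0 <= k i) ->
  j \in supp u -> k j = 0 -> conformal w u /\ supp w \proper supp u.
Proof.
move=> wk k0 ju kj.
have wu : conformal w u.
  move=> i; rewrite wk; split=> [|-> ]; last by rewrite mulr0.
  have [u0 | un0] := eqVneq (u i 0) 0; first by rewrite u0 !mulr0.
  by rewrite -mulrA -expr2 mulr_ge0 ?sqr_ge0 // k0 // inE.
split=> //; apply/properP; split; first exact: conformal_supp.
by exists j; rewrite // inE wk kj mul0r eqxx.
Qed.

Lemma supp_ratioE u v : supp v \subset supp u -> forall i, v i 0 = v i 0 / u i 0 * u i 0.
Proof.
move=> /subsetP vu i; have [u0 | un0] := eqVneq (u i 0) 0; last by rewrite divfK.
rewrite u0 mulr0; apply/eqP; apply: contraT => vi.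
by move: (vu i); rewrite !inE vi u0 eqxx => /(_ isT).
Qed.

Definition steep mu c d := mu * l1norm d <= - vdot c d.

Lemma steepD mu c d e : 0 <= mu -> steep mu c d -> steep mu c e -> steep mu c (d + e).
Proof.
rewrite /steep vdotD opprD => mu0 hd he.
by apply: le_trans (ler_wpM2l mu0 (l1normD d e)) _; rewrite mulrDr lerD.
Qed.

Lemma steepZ mu c a d : 0 <= a -> steep mu c d -> steep mu c (a *: d).
Proof.
move=> a0; rewrite /steep l1normZ vdotZ -mulrN ger0_norm // mulrCA.
exact: ler_wpM2l.
Qed.

Lemma steepN mu c u : steep mu c (- u) <-> mu * l1norm u <= vdot c u.
Proof. by rewrite /steep l1normN vdotN opprK. Qed.

Lemma steep_defect_lipschitz mu c d e : 0 <= mu ->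
  mu * l1norm e + vdot c e <= mu * l1norm d + vdot c d + (mu + l1norm c) * l1norm (e - d).
Proof.
move=> mu0; set f := e - d; have -> : e = d + f by rewrite /f addrC subrK.
have := ler_wpM2l mu0 (l1normD d f); have := ler_norm (vdot c f).
have := norm_vdot_le c f; rewrite vdotD mulrDl; lra.
Qed.

Lemma steep_telescope mu c (g : nat -> 'cV[R]_n) :
  0 <= mu -> (forall k, steep mu c (g k.+1 - g k)) ->
  forall k j, steep mu c (g (k + j)%N - g k).
Proof.
move=> mu0 hg k; elim=> [|j IH]; first by rewrite addn0 subrr /steep l1norm0 vdot0 oppr0 mulr0.
have -> : g (k + j.+1)%N - g k = (g (k + j).+1 - g (k + j)%N) + (g (k + j)%N - g k).
  by rewrite addnS addrA subrK.
exact: steepD.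
Qed.

Variable m : nat.
Implicit Types A : 'M[R]_(m, n).

Definition descent_dir A c u :=
  forall v, A *m v = 0 -> conformal v u -> v != 0 -> 0 < vdot c v.

Lemma descent_dir_conformal A c u w :
  conformal w u -> descent_dir A c u -> descent_dir A c w.
Proof. by move=> wu hu v Av vw; apply: hu => //; exact: conformal_trans vw wu. Qed.

Definition elementary A u := [/\ A *m u = 0, u != 0 &
  forall v, A *m v = 0 -> supp v \subset supp u -> exists t, v = t *: u].

Lemma elementary_bound A c (J : {set 'I_n}) : exists2 mu, 0 < mu &
  forall u, elementary A u -> supp u = J -> 0 < vdot c u -> mu * l1norm u <= vdot c u.
Proof.
case: (classic (exists u0, [/\ elementary A u0, supp u0 = J & 0 < vdot c u0])); last first.
  by move=> none; exists 1 => // u *; case: none; exists u.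
case=> u0 [[Au0 u0nz _] su0 cu0]; have l0 := l1norm_gt0 u0nz.
exists (vdot c u0 / l1norm u0) => [|u [Au unz hu] su cu]; first by rewrite divr_gt0.
have [t u0E] : exists t, u0 = t *: u by apply: hu; rewrite // su su0.
rewrite {}u0E vdotZ pmulr_lgt0 // in cu0 *.
have lu := l1norm_gt0 unz.
rewrite l1normZ gtr0_norm // -mulf_div divff ?gt_eqF // mul1r divfK ?gt_eqF //.
Qed.

Lemma fintype_pos_uniform (T : finType) (Q : T -> R -> Prop) :
  (forall t, exists2 e, 0 < e & Q t e) ->
  (forall t e e', Q t e -> 0 < e' -> e' <= e -> Q t e') ->
  exists2 e, 0 < e & forall t, Q t e.
Proof.
move=> hex hmon.
suff [e e0 he] : exists2 e, 0 < e & forall t, t \in enum T -> Q t e.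
  by exists e => // t; apply: he; rewrite mem_enum.
elim: (enum T) => [|a s [e e0 he]]; first by exists 1.
have [ea ea0 hea] := hex a.
have emin0 : 0 < Num.min e ea by rewrite lt_min e0 ea0.
exists (Num.min e ea) => // t; rewrite inE => /predU1P [-> | ts].
  by apply: hmon hea _ _; rewrite // ge_min lexx orbT.
by apply: hmon (he t ts) _ _; rewrite // ge_min lexx.
Qed.

Lemma elementary_uniform_bound A c : exists2 mu, 0 < mu &
  forall u, elementary A u -> 0 < vdot c u -> mu * l1norm u <= vdot c u.
Proof.
have [mu mu0 hmu] := @fintype_pos_uniform _
  (fun J e => forall u, elementary A u -> supp u = J -> 0 < vdot c u ->
                        e * l1norm u <= vdot c u)
  (elementary_bound A c)
  (fun J e e' h _ le u eu su cu => le_trans (ler_wpM2r (l1norm_ge0 u) le) (h u eu su cu)).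
by exists mu => // u eu; apply: hmu.
Qed.

(* Removing the extreme multiples r_min u and r_max u of u from a kernel vector
   v that is not proportional to u splits a positive multiple of u into two
   kernel vectors conformal to u with strictly smaller support. *)
Lemma kernel_split A u v :
  A *m u = 0 -> A *m v = 0 -> supp v \subset supp u -> (forall t, v != t *: u) ->
  exists w1 w2 t, [/\ 0 < t, t *: u = w1 + w2,
    [/\ A *m w1 = 0, conformal w1 u & supp w1 \proper supp u] &
    [/\ A *m w2 = 0, conformal w2 u & supp w2 \proper supp u]].
Proof.
move=> Au Av vu nmul; set r := fun i => v i 0 / u i 0.
have vE : forall i, v i 0 = r i * u i 0 := supp_ratioE vu.
have [i0 i0u] : exists i0, i0 \in supp u.
  apply/set0Pn/negP => /eqP su0; case/eqP: (nmul 0); apply/matrixP => i j.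
  have := in_set0 i; rewrite -su0 inE ord1 !mxE vE => /negbFE/eqP ->.
  by rewrite !mulr0.
case: (arg_minP r i0u) => jmin jminu minr; case: (arg_maxP r i0u) => jmax jmaxu maxr.
have rlt : r jmin < r jmax.
  rewrite ltNge; apply/negP => hle; case/eqP: (nmul (r jmin)).
  apply/matrixP => i j; rewrite ord1 mxE vE.
  have [iu | ] := boolP (i \in supp u); last by rewrite inE negbK => /eqP ->; rewrite !mulr0.
  by congr (_ * _); apply/le_anti; rewrite minr // (le_trans (maxr i iu)).
exists (v - r jmin *: u), (r jmax *: u - v), (r jmax - r jmin).
have Aw (a : R) : A *m (v - a *: u) = 0 /\ A *m (a *: u - v) = 0.
  by rewrite !mulmxBr -!scalemxAr Au Av scaler0 subrr.
split; first by rewrite subr_gt0.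
- by rewrite scalerBl [RHS]addrC addrA subrK.
- have w1E i : (v - r jmin *: u) i 0 = (r i - r jmin) * u i 0 by rewrite !mxE vE; ring.
  have [] := conformal_scale_proper w1E _ jminu (subrr _).
    by move=> i iu; rewrite subr_ge0 minr.
  by split=> //; exact: (Aw _).1.
- have w2E i : (r jmax *: u - v) i 0 = (r jmax - r i) * u i 0 by rewrite !mxE vE; ring.
  have [] := conformal_scale_proper w2E _ jmaxu (subrr _).
    by move=> i iu; rewrite subr_ge0; exact: maxr.
  by split=> //; exact: (Aw _).2.
Qed.

Lemma descent_dir_bound A c : exists2 mu, 0 < mu &
  forall u, A *m u = 0 -> descent_dir A c u -> mu * l1norm u <= vdot c u.
Proof.
have [mu mu0 hmu] := elementary_uniform_bound A c.
exists mu => // u; move: {2}#|supp u|.+1 (ltnSn #|supp u|) => k.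
elim: k u => [//|k IH] u hk Au hu.
have [-> | unz] := eqVneq u 0; first by rewrite l1norm0 vdot0 mulr0.
case: (classic (elementary A u)) => [eu | neu].
  by apply: hmu => //; apply: hu => //; exact: conformal_refl.
have [v [Av vu nmul]] : exists v, [/\ A *m v = 0, supp v \subset supp u &
                                       forall t, v != t *: u].
  apply: NNPP => none; apply: neu; split=> // v Av vu.
  apply: NNPP => nt; apply: none; exists v; split=> // t.
  by apply/eqP => vt; apply: nt; exists t.
have [w1 [w2 [t [t0 tu [A1 c1 p1] [A2 c2 p2]]]]] := kernel_split Au Av vu nmul.
have b1 := IH w1 (leq_trans (proper_card p1) hk) A1 (descent_dir_conformal c1 hu).
have b2 := IH w2 (leq_trans (proper_card p2) hk) A2 (descent_dir_conformal c2 hu).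
rewrite -(ler_pM2l t0) mulrCA -[t in t * l1norm u]gtr0_norm // -l1normZ -vdotZ tu vdotD.
by apply: le_trans (ler_wpM2l (ltW mu0) (l1normD _ _)) _; rewrite mulrDr lerD.
Qed.

End L1Geometry.

Section AffineScaling.
Variables (R : archiRcfType) (m n : nat) (A : 'M[R]_(m, n)) (c : 'cV[R]_n).
Implicit Types (x u v : 'cV[R]_n) (mu : R).

Lemma cost_vdot v : cost c v = vdot c v.
Proof. by rewrite vdotE. Qed.

Lemma enorm_le_l1norm v : enorm v <= l1norm v.
Proof.
rewrite /enorm -(ger0_norm (l1norm_ge0 v)) -sqrtr_sqr; apply: ler_wsqrtr.
rewrite expr2 mulr_suml; apply: ler_sum => i _.
by rewrite -real_normK ?num_real // expr2 ler_wpM2l ?norm_le_l1norm.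
Qed.

Lemma norm_le_enorm v i : `|v i 0| <= enorm v.
Proof.
rewrite /enorm -sqrtr_sqr; apply: ler_wsqrtr.
by rewrite (bigD1 i) //= lerDl sumr_ge0 // => j _; exact: sqr_ge0.
Qed.

Lemma l1norm_le_enorm v : l1norm v <= n%:R * enorm v.
Proof.
rewrite /l1norm mulr_natl -[n in _ *+ n]card_ord -sumr_const.
by apply: ler_sum => i _; exact: norm_le_enorm.
Qed.

Lemma steep_closed mu y z (h : nat -> 'cV[R]_n) : 0 <= mu ->
  (forall j, steep mu c (h j - y)) ->
  (forall eps, 0 < eps -> exists J, forall j, (J <= j)%N -> enorm (h j - z) < eps) ->
  steep mu c (z - y).
Proof.
move=> mu0 hs hlim; rewrite /steep -subr_le0; apply/ler_addgt0Pr => e e0.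
set K := n%:R * (mu + l1norm c) + 1.
have mc0 : 0 <= mu + l1norm c by rewrite addr_ge0 // l1norm_ge0.
have K0 : 0 < K by rewrite ltr_pwDr // mulr_ge0.
have [J hJ] := hlim (e / K) (divr_gt0 e0 K0).
have hJe : enorm (h J - z) * K < e by rewrite -ltr_pdivlMr // hJ.
have close : (mu + l1norm c) * l1norm (z - h J) <= enorm (h J - z) * K.
  rewrite l1normB; apply: le_trans (ler_wpM2l mc0 (l1norm_le_enorm _)) _.
  have -> : (mu + l1norm c) * (n%:R * enorm (h J - z)) =
            enorm (h J - z) * (n%:R * (mu + l1norm c)) by ring.
  by rewrite ler_wpM2l ?sqrtr_ge0 ?lerDl.
have := steep_defect_lipschitz c (h J - y) (z - y) mu0.
have -> : z - y - (h J - y) = z - h J by rewrite opprB addrA subrK.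
have := hs J; rewrite /steep.
lra.
Qed.

Lemma Xsq_mulE x v i : (Xsq x *m v) i 0 = x i 0 ^+ 2 * v i 0.
Proof. by rewrite /Xsq mul_diag_mx !mxE. Qed.

Lemma unitmx_AXsqAt x : \rank A = m -> (forall i, x i 0 != 0) ->
  A *m Xsq x *m A^T \in unitmx.
Proof.
move=> rA x0; rewrite -row_free_unit; apply: inj_row_free => z hz.
set w := z *m A.
have quad0 : \sum_j (w 0 j ^+ 2 * x j 0 ^+ 2) = 0.
  have : (w *m Xsq x *m w^T) 0 0 = 0.
    by rewrite trmx_mul !mulmxA -(mulmxA z) -(mulmxA z) hz mul0mx mxE.
  rewrite /Xsq mul_mx_diag mxE => h; rewrite -[RHS]h.
  by apply: eq_bigr => j _; rewrite !mxE; ring.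
have w0 j : w 0 j = 0.
  have nn i : true -> 0 <= w 0 i ^+ 2 * x i 0 ^+ 2 by rewrite mulr_ge0 ?sqr_ge0.
  move/eqP: (psumr_eq0P nn quad0 (i := j) isT).
  by rewrite mulf_eq0 !expf_eq0 /= (negbTE (x0 j)) orbF => /eqP.
have : z *m A = 0 by apply/matrixP => i j; rewrite ord1 w0 mxE.
by move/eqP; rewrite mulmx_free_eq0 ?/row_free ?rA // => /eqP.
Qed.

Lemma mulmx_Xsq_slack x : A *m Xsq x *m A^T \in unitmx ->
  A *m (Xsq x *m slack A c x) = 0.
Proof.
move=> hu; rewrite /slack /dual_y mulmxBr mulmxA mulmxBr !mulmxA.
by rewrite mulmxV // mul1mx subrr.
Qed.

Lemma vdot_slack x v : A *m v = 0 -> vdot c v = vdot (slack A c x) v.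
Proof.
move=> Av; rewrite !vdotE /slack linearB /= mulmxBl trmx_mul trmxK -mulmxA Av.
by rewrite mulmx0 subr0.
Qed.

(* Against kernel vectors c acts as the slack s, and a vector conformal to
   X^2 s has v_i s_i >= 0 for every i. *)
Lemma descent_dir_Xsq_slack x : (forall i, x i 0 != 0) ->
  A *m Xsq x *m A^T \in unitmx -> descent_dir A c (Xsq x *m slack A c x).
Proof.
move=> x0 hu v Av vu /col_neq0 [i0 vi0]; rewrite (vdot_slack x Av).
set s := slack A c x.
have xsq i : 0 < x i 0 ^+ 2 by rewrite exprn_even_gt0 //= x0.
have sv i : v i 0 * (Xsq x *m s) i 0 = x i 0 ^+ 2 * (s i 0 * v i 0).
  by rewrite Xsq_mulE; ring.
have sv_ge0 i : 0 <= s i 0 * v i 0 by rewrite -(pmulr_rge0 _ (xsq i)) -sv; case: (vu i).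
have sv_gt0 : 0 < s i0 0 * v i0 0.
  rewrite -(pmulr_rgt0 _ (xsq i0)) -sv lt0r (vu i0).1 andbT mulf_neq0 //.
  by apply: contra vi0 => /eqP /(vu i0).2 ->.
rewrite /vdot (bigD1 i0) //= ltr_pwDl //; exact: sumr_ge0.
Qed.

Section Steepness.
Variables (mu : R) (mu_bound : forall u, A *m u = 0 -> descent_dir A c u ->
                                   mu * l1norm u <= vdot c u).

Lemma afs_step_steep alpha x : \rank A = m -> (forall i, 0 < x i 0) -> 0 <= alpha ->
  steep mu c (afs_step A c alpha x).
Proof.
move=> rA x0 a0; have x0' i : x i 0 != 0 by rewrite gt_eqF.
have hu := unitmx_AXsqAt rA x0'.
have g0 : 0 <= alpha / gam (Xmul x (slack A c x)) by rewrite divr_ge0 // bigmax_ge_id.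
apply/steepN; rewrite l1normZ vdotZ ger0_norm // mulrCA ler_wpM2l //.
by apply: mu_bound; [exact: mulmx_Xsq_slack | exact: descent_dir_Xsq_slack].
Qed.

Lemma gafs_steep alpha beta x0 : \rank A = m -> 0 <= mu -> 0 <= alpha -> 0 <= beta ->
  (forall k i, 0 < gafs A c alpha beta x0 k i 0) ->
  forall k, steep mu c (gafs A c alpha beta x0 k.+1 - gafs A c alpha beta x0 k).
Proof.
move=> rA mu0 a0 b0 hpos; rewrite /gafs; elim=> [|k IH] /=.
  by rewrite addrAC subrr add0r; apply: afs_step_steep => //; exact: (hpos 0%N).
move: IH; set p := gafs_pair A c alpha beta x0 k => IH.
rewrite addrAC [p.2 + _]addrC addrK; apply: steepD => //.
  by apply: afs_step_steep => //; exact: (hpos k.+1).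
by apply: steepZ IH; rewrite divr_ge0 // bigmax_ge_id.
Qed.

Lemma gafs_gap_bound alpha beta x0 xstar :
  \rank A = m -> 0 <= mu -> 0 <= alpha -> 0 <= beta ->
  (forall k i, 0 < gafs A c alpha beta x0 k i 0) ->
  (forall eps, 0 < eps -> exists K, forall k, (K <= k)%N ->
       enorm (gafs A c alpha beta x0 k - xstar) < eps) ->
  forall k, let x := gafs A c alpha beta x0 k in
    mu * l1norm (x - xstar) <= cost c x - cost c xstar.
Proof.
move=> rA mu0 a0 b0 hpos hlim k /=; set x := gafs A c alpha beta x0.
have := @steep_closed mu (x k) xstar (fun j => x (k + j)%N) mu0.
rewrite /steep l1normB !cost_vdot vdotB opprB; apply.
  exact: steep_telescope mu0 (gafs_steep rA mu0 a0 b0 hpos) k.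
by move=> e /hlim [K hK]; exists K => j Kj; apply: hK; exact: leq_trans Kj (leq_addl _ _).
Qed.

End Steepness.

End AffineScaling.

Theorem theorem5 (R : archiRcfType) (m n : nat)
    (A : 'M[R]_(m, n)) (b : 'cV[R]_m) (c : 'cV[R]_n)
    (alpha beta : R) (x0 xstar : 'cV[R]_n) :
  \rank A = m ->
  (exists x : 'cV[R]_n, A *m x = b /\ forall i, 0 < x i 0) ->
  (exists x1 x2 : 'cV[R]_n, feasible A b x1 /\ feasible A b x2 /\
                            cost c x1 <> cost c x2) ->
  (exists xo : 'cV[R]_n, feasible A b xo /\
       forall z, feasible A b z -> cost c xo <= cost c z) ->
  inQ alpha beta ->
  (forall i, 0 < x0 i 0) -> A *m x0 = b ->
  (forall k i, 0 < gafs A c alpha beta x0 k i 0) ->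
  (forall k, exists i, 0 < Xmul (gafs A c alpha beta x0 k)
                              (slack A c (gafs A c alpha beta x0 k)) i 0) ->
  (forall k, gafs A c alpha beta x0 k.+1 != gafs A c alpha beta x0 k) ->
  (forall eps : R, 0 < eps -> exists K : nat, forall k, (K <= k)%N ->
       enorm (gafs A c alpha beta x0 k - xstar) < eps) ->
  exists delta Rb : R, 0 < delta /\ 0 < Rb /\
    forall k : nat,
      let xk := gafs A c alpha beta x0 k in
      let gap := cost c xk - cost c xstar in
      enorm (xk - xstar) <= Rb * gap /\
      delta * (\sum_(i < n | xstar i 0 == 0) xk i 0) <= gap /\
      delta * (\sum_(i < n | 0 < xstar i 0) `|xk i 0 - xstar i 0|) <= gap.
Proof.
move=> rA _ _ _ [/andP [a0 _] [b0 _]] _ _ hpos _ _ hlim.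
have [mu mu0 mu_bound] := descent_dir_bound A c.
exists mu, mu^-1; split=> //; split=> [|k]; first by rewrite invr_gt0.
have gap_bound := gafs_gap_bound mu_bound rA (ltW mu0) (ltW a0) b0 hpos hlim k.
set x := gafs A c alpha beta x0 k in gap_bound *.
have sum_le P : mu * \sum_(i | P i) `|x i 0 - xstar i 0| <= cost c x - cost c xstar.
  apply: le_trans gap_bound; rewrite ler_wpM2l ?(ltW mu0) //.
  apply: le_trans (sum_norm_le_l1norm P (x - xstar)).
  by apply: ler_sum => i _; rewrite !mxE.
rewrite /= -(ler_pM2l mu0) mulrA mulfV ?gt_eqF // mul1r; split.
  exact: le_trans (ler_wpM2l (ltW mu0) (enorm_le_l1norm _)) gap_bound.
split; last exact: sum_le.
apply: le_trans (sum_le (fun i => xstar i 0 == 0)); rewrite ler_wpM2l ?(ltW mu0) //.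
by apply: ler_sum => i /eqP ->; rewrite subr0 ler_norm.
Qed.
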